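(* Let $m\ge1$ and let $X_1,\dots,X_m$ be independent random variables, $X_i$ geometric with success probability $p_i\in(0,1]$. Let $Y_1,\dots,Y_m$ be i.i.d. geometric random variables with success probability $\bar p=\frac1m\sum_{i=1}^mp_i$, independent of $X_1,\dots,X_m$. Then for every positive integer $j$, $$\mathbb{P}\Big(\sum_{i=1}^mX_i\ge j\Big)\ge\mathbb{P}\Big(\sum_{i=1}^mY_i\ge j\Big).$$
   Context: A random variable $Y$ is geometric with success probability $p$ if $\mathbb{P}(Y=s)=(1-p)^{s-1}p$ for $s=1,2,\dots$. *)

From HB Require Import structures.
From mathcomp Require Import all_boot all_order all_algebra.
Set Implicit Arguments. Unset Strict Implicit. Unset Printing Implicit Defensive.
Import Order.TTheory GRing.Theory Num.Theory.
Local Open Scope ring_scope.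

Definition geom_pmf {R : realFieldType} (p : R) (s : nat) : R :=
  if (0 < s)%N then (1 - p) ^+ s.-1 * p else 0.

(* Each s_i <= k, so s ranges over
   finite functions 'I_m -> 'I_(k+1). *)
Definition sum_geom_pmf {R : realFieldType} (m : nat) (p : 'I_m -> R) (k : nat) : R :=
  \sum_(s : {ffun 'I_m -> 'I_k.+1} | (\sum_(i < m) (s i : nat))%N == k)
     \prod_(i < m) geom_pmf (p i) (s i).

Definition sum_geom_tail {R : realFieldType} (m : nat) (p : 'I_m -> R) (j : nat) : R :=
  1 - \sum_(k < j) sum_geom_pmf p k.

From HB Require Import structures.
From mathcomp Require Import all_boot all_order all_algebra.
From mathcomp Require Import ring lra.

Set Implicit Arguments.
Unset Strict Implicit.
Unset Printing Implicit Defensive.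

Import Order.TTheory GRing.Theory Num.Theory.
Local Open Scope ring_scope.

(* Work with probability generating functions in R[X]/(X^(n+1)), where every
   1 - qX is invertible.  A geometric law has generating function
   g_p = pX/(1 - (1-p)X), and the partial coefficient sums of F are the
   coefficients of F/(1 - X).  If a + b = p1 + p2 and p1 p2 <= a b, then
     (g_a g_b - g_p1 g_p2)/(1 - X)
       = (a b - p1 p2) X^2 (1 + p2 X/(1 - (1-p1)X))
         / ((1 - (1-p2)X) (1 - (1-a)X) (1 - (1-b)X))
   has nonnegative coefficients, so replacing p1 <= pbar <= p2 by pbar and
   p1 + p2 - pbar makes the sum stochastically smaller.  This order survives
   adding an independent summand, and m - 1 such replacements turn every p_i
   into pbar. *)

(* The closure instances of [Num.nneg] are keyed on its underlying predicate. *)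
Local Notation nneg := (polyOver Num.Def.nneg_num_pred).

Section TruncatedPowerSeries.
Variables (R : comNzRingType) (n : nat).
Local Notation trunc := (in_qpoly ('X^(n.+1) : {poly R})).

Lemma in_qpolyXnE (P : {poly R}) : trunc P = take_poly n.+1 P :> {poly R}.
Proof. by rewrite /= mk_monic_Xn Pdiv.RingMonic.take_poly_rmodp. Qed.

Lemma in_qpolyXnP (P Q : {poly R}) :
  trunc P = trunc Q <-> forall k, (k <= n)%N -> P`_k = Q`_k.
Proof.
split=> [eqPQ k le_kn | eqPQ].
  move: (congr1 (fun S => (polyn S)`_k) eqPQ).
  by rewrite !in_qpolyXnE !coef_take_poly ltnS le_kn.
apply: val_inj; apply/polyP => k.
change ((polyn (trunc P))`_k = (polyn (trunc Q))`_k).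
by rewrite !in_qpolyXnE !coef_take_poly ltnS; case: leqP => // /eqPQ.
Qed.

End TruncatedPowerSeries.

Lemma geometric_pair_identity (Q : comRingType) (x a b p1 p2 ga gb g1 g2 : Q) :
  a + b = p1 + p2 ->
  ga * (1 - (1 - a) * x) = 1 -> gb * (1 - (1 - b) * x) = 1 ->
  g1 * (1 - (1 - p1) * x) = 1 -> g2 * (1 - (1 - p2) * x) = 1 ->
  a * x * ga * (b * x * gb) - p1 * x * g1 * (p2 * x * g2) =
  (a * b - p1 * p2) * x ^+ 2 * (1 + p2 * x * g1) * g2 * ga * gb * (1 - x).
Proof.
move=> sum_ab.
have : a * b * (1 - (1 - p1) * x) * (1 - (1 - p2) * x)
       - p1 * p2 * (1 - (1 - a) * x) * (1 - (1 - b) * x)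
     = (a * b - p1 * p2) * ((1 - (1 - p1) * x) + p2 * x) * (1 - x).
  by rewrite -[b](addKr a) sum_ab; ring.
(* [ring:] uses its hypotheses as rewrite rules on monomials, hence the atoms. *)
move: (1 - (1 - a) * x) (1 - (1 - b) * x) (1 - (1 - p1) * x) (1 - (1 - p2) * x).
move=> ea eb e1 e2 cleared ha hb h1 h2.
transitivity (x ^+ 2 * g1 * g2 * ga * gb * (a * b * e1 * e2 - p1 * p2 * ea * eb)).
  by ring: ha hb h1 h2.
by rewrite cleared; ring: h1.
Qed.

Section GeometricGeneratingFunctions.
Variables (R : realFieldType) (n : nat).
Local Notation trunc := (in_qpoly ('X^(n.+1) : {poly R})).

Definition geom_series (q : R) : {poly R} := \poly_(k < n.+1) q ^+ k.

Definition geom_pgf (p : R) : {poly R} := \poly_(s < n.+1) geom_pmf p s.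

Lemma in_qpoly_geom_series_inverse (q : R) :
  trunc (geom_series q) * trunc (1 - q%:P * 'X) = 1.
Proof.
rewrite -rmorphM -in_qpoly1; apply/in_qpolyXnP => k le_kn.
rewrite mulrBr mulr1 mulrA coefB coefMX coefMC coef1 !coef_poly.
case: k le_kn => [|k] le_kn; first by rewrite subr0.
by rewrite /= !ltnS le_kn (ltnW le_kn) exprSr subrr.
Qed.

Lemma in_qpoly_geom_pgf (p : R) :
  trunc (geom_pgf p) = trunc (p%:P * 'X * geom_series (1 - p)).
Proof.
apply/in_qpolyXnP => k le_kn; rewrite -mulrA coefCM coefXM !coef_poly ltnS le_kn.
by case: k le_kn => [|k] le_kn; rewrite /geom_pmf ?mulr0 //= ltnS (ltnW le_kn) mulrC.
Qed.

Lemma geom_series_nneg (q : R) : 0 <= q -> geom_series q \is a nneg.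
Proof. by move=> q_ge0; apply: polyOver_poly => k _; rewrite nnegrE exprn_ge0. Qed.

Lemma geom_pgf_nneg (p : R) : 0 <= p <= 1 -> geom_pgf p \is a nneg.
Proof.
case/andP=> p_ge0 p_le1; apply: polyOver_poly => s _; rewrite nnegrE /geom_pmf.
by case: ifP => // _; rewrite mulr_ge0 // exprn_ge0 // subr_ge0.
Qed.

(* The partial coefficient sums of [A] are bounded by those of [B] up to
   degree [n] (lemma [cdf_le_sum]) as soon as (B - A)/(1 - X) has nonnegative
   coefficients. *)
Definition cdf_le (A B : {poly R}) :=
  exists2 W : {poly R}, W \is a nneg & trunc (B - A) = trunc (W * (1 - 'X)).

Lemma cdf_le_refl (A : {poly R}) : cdf_le A A.
Proof. by exists 0; rewrite ?rpred0 // subrr mul0r. Qed.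

Lemma cdf_le_trans (A B C : {poly R}) : cdf_le A B -> cdf_le B C -> cdf_le A C.
Proof.
case=> [V V_ge0 eqV] [W W_ge0 eqW]; exists (V + W); first exact: rpredD.
by rewrite -(subrKA B) rmorphD /= eqV eqW -rmorphD mulrDl addrC.
Qed.

Lemma cdf_leMl (C A B : {poly R}) :
  C \is a nneg -> cdf_le A B -> cdf_le (C * A) (C * B).
Proof.
move=> C_ge0 [W W_ge0 eqW]; exists (C * W); first exact: rpredM.
by rewrite -mulrBr -mulrA rmorphM [RHS]rmorphM /= eqW.
Qed.

Lemma sum_coef_mul1subX (W : {poly R}) r :
  \sum_(k < r.+1) (W * (1 - 'X))`_k = W`_r.
Proof.
elim: r => [|r IH]; first by rewrite big_ord1 mulrBr mulr1 coefB coefMX subr0.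
by rewrite big_ord_recr /= IH mulrBr mulr1 coefB coefMX /= addrC subrK.
Qed.

Lemma cdf_le_sum (A B : {poly R}) r : cdf_le A B -> (r <= n)%N ->
  \sum_(k < r.+1) A`_k <= \sum_(k < r.+1) B`_k.
Proof.
case=> W /polyOverP W_ge0 /in_qpolyXnP eqW le_rn; rewrite -subr_ge0 -sumrB.
have -> : \sum_(k < r.+1) (B`_k - A`_k) = W`_r.
  rewrite -(sum_coef_mul1subX W r); apply: eq_bigr => k _.
  by rewrite -coefB eqW // -ltnS (leq_trans (ltn_ord k)).
exact: W_ge0.
Qed.

Lemma cdf_le_geom_pair (p1 p2 a b : R) :
  p1 <= 1 -> 0 <= p2 <= 1 -> a <= 1 -> b <= 1 ->
  a + b = p1 + p2 -> p1 * p2 <= a * b ->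
  cdf_le (geom_pgf p1 * geom_pgf p2) (geom_pgf a * geom_pgf b).
Proof.
move=> p1_le1 /andP[p2_ge0 p2_le1] a_le1 b_le1 sum_ab le_prod.
have G_ge0 q : q <= 1 -> geom_series (1 - q) \is a nneg.
  by move=> q_le1; rewrite geom_series_nneg // subr_ge0.
exists ((a%:P * b%:P - p1%:P * p2%:P) * 'X^2
         * (1 + p2%:P * 'X * geom_series (1 - p1))
         * geom_series (1 - p2) * geom_series (1 - a) * geom_series (1 - b)).
  rewrite -!polyCM -polyCB !(rpredM, rpredD, rpred1, polyOverX, G_ge0) //
    !polyOverC !unfold_in /= ?subr_ge0 //.
have inv q : trunc (geom_series (1 - q)) * (1 - (1 - trunc q%:P) * trunc 'X) = 1.
  rewrite -[RHS](in_qpoly_geom_series_inverse (1 - q)) rmorphB rmorphM.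
  by rewrite polyCB rmorphB /= polyC1 !in_qpoly1.
have gfE p :
    trunc (geom_pgf p) = trunc p%:P * trunc 'X * trunc (geom_series (1 - p)).
  by rewrite in_qpoly_geom_pgf !rmorphM.
rewrite [LHS]rmorphB !rmorphM /= !gfE [trunc (_ * _ - _)]rmorphB.
rewrite [trunc (1 - _)]rmorphB rmorphD !rmorphM /= !in_qpoly1.
apply: geometric_pair_identity; rewrite ?inv //.
by rewrite -!rmorphD /= sum_ab.
Qed.

Lemma cdf_le_geom_straddle (x y c : R) : 0 <= x -> x <= c -> c <= y -> y <= 1 ->
  cdf_le (geom_pgf x * geom_pgf y) (geom_pgf c * geom_pgf (x + y - c)).
Proof.
move=> x_ge0 le_xc le_cy y_le1.
apply: cdf_le_geom_pair; [lra | apply/andP; split; lra | lra | lra | lra |].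
have : 0 <= (c - x) * (y - c) by rewrite mulr_ge0 // subr_ge0.
lra.
Qed.

End GeometricGeneratingFunctions.

Lemma exists_le_of_sum_le (R : realDomainType) (I : eqType) (l : seq I)
    (F G : I -> R) :
  l != [::] -> \sum_(i <- l) F i <= \sum_(i <- l) G i ->
  exists2 i, i \in l & F i <= G i.
Proof.
move=> l_nz; have [/hasP // | /hasPn gt_FG] := boolP (has (fun i => F i <= G i) l).
rewrite big_seq [leRHS]big_seq leNgt ltr_sum // => [|i /gt_FG]; last by rewrite ltNge.
by case: l l_nz {gt_FG} => // i l _; apply/hasP; exists i; rewrite ?mem_head.
Qed.

Lemma exists_straddle_mean (R : realDomainType) k (l : seq R) c :
  size l = k.+2 -> \sum_(x <- l) x = k.+2%:R * c ->
  exists x y l', [/\ perm_eq l [:: x, y & l'], x <= c & c <= y].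
Proof.
have sum_c (s : seq R) : \sum_(x <- s) c = (size s)%:R * c.
  by rewrite big_const_seq count_predT iter_addr_0 mulr_natl.
move=> size_l mean; have l_nz : l != [::] by rewrite -size_eq0 size_l.
have [x xl le_xc] : exists2 x, x \in l & x <= c.
  by apply: exists_le_of_sum_le l_nz _; rewrite sum_c size_l mean.
have perm_x := perm_to_rem xl; set l1 := rem x l in perm_x.
have l1_nz : l1 != [::] by rewrite -size_eq0 size_rem // size_l.
have [y yl1 le_cy] : exists2 y, y \in l1 & c <= y.
  apply: exists_le_of_sum_le l1_nz _; rewrite sum_c size_rem // size_l /=.
  move: mean; rewrite (perm_big _ perm_x) big_cons /= mulrSr mulrDl mul1r; lra.
exists x, y, (rem y l1); split=> //.
by apply: (perm_trans perm_x); rewrite perm_cons perm_to_rem.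
Qed.

Section Smoothing.
Variables (R : realFieldType) (n : nat).
Local Notation g := (geom_pgf n).

Lemma cdf_le_smooth k (l : seq R) c :
  size l = k -> (forall x, x \in l -> 0 <= x <= 1) -> \sum_(x <- l) x = k%:R * c ->
  cdf_le n (\prod_(x <- l) g x) (g c ^+ k).
Proof.
elim: k l => [|k IH] l size_l in01 mean.
  by rewrite (size0nil size_l) big_nil expr0; apply: cdf_le_refl.
case: k IH size_l mean => [|k] IH size_l mean.
  case: l size_l mean {in01} => [|x []] // _; rewrite !big_seq1 mul1r => ->.
  exact: cdf_le_refl.
have [x [y [l' [perm_l le_xc le_cy]]]] := exists_straddle_mean size_l mean.
have in01' z : z \in [:: x, y & l'] -> 0 <= z <= 1.
  by move=> zl; apply: in01; rewrite (perm_mem perm_l).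
have /andP[x_ge0 x_le1] : 0 <= x <= 1 by apply/in01'/mem_head.
have /andP[y_ge0 y_le1] : 0 <= y <= 1 by apply/in01'/mem_behead/mem_head.
set w := x + y - c.
have IHw : cdf_le n (\prod_(z <- w :: l') g z) (g c ^+ k.+1).
  apply: IH => [|z|]; first by move: size_l; rewrite (perm_size perm_l) /= => -[<-].
    rewrite inE => /predU1P[-> | zl']; last exact/in01'/mem_behead/mem_behead.
    by rewrite /w; apply/andP; split; lra.
  move: mean; rewrite (perm_big _ perm_l) !big_cons /= /w.
  rewrite [k.+2%:R]mulrSr mulrDl mul1r; lra.
have rest_ge0 : \prod_(z <- l') g z \is a nneg.
  rewrite big_seq rpred_prod // => z zl'.
  exact/geom_pgf_nneg/in01'/mem_behead/mem_behead.
have pair := cdf_le_geom_straddle n x_ge0 le_xc le_cy y_le1.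
have -> : \prod_(z <- l) g z = \prod_(z <- l') g z * (g x * g y).
  by rewrite (perm_big _ perm_l) !big_cons /=; ring.
apply: cdf_le_trans (cdf_leMl rest_ge0 pair) _.
have -> : \prod_(z <- l') g z * (g c * g w) = g c * \prod_(z <- w :: l') g z.
  by rewrite big_cons /=; ring.
rewrite exprS; apply: cdf_leMl IHw.
by apply: geom_pgf_nneg; apply/andP; split; lra.
Qed.

End Smoothing.

Lemma coef_prod_geom_pgf (R : realFieldType) m (p : 'I_m -> R) n k : (k <= n)%N ->
  (\prod_(i < m) geom_pgf n (p i))`_k = sum_geom_pmf p k.
Proof.
move=> le_kn.
have trunc_k : in_qpoly 'X^(k.+1) (\prod_(i < m) geom_pgf n (p i))
             = in_qpoly 'X^(k.+1) (\prod_(i < m) geom_pgf k (p i)).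
  rewrite !rmorph_prod /=; apply: eq_bigr => i _; apply/in_qpolyXnP => s le_sk.
  by rewrite !coef_poly !ltnS le_sk (leq_trans le_sk le_kn).
rewrite ((in_qpolyXnP k _ _).1 trunc_k k (leqnn k)) /geom_pgf.
under eq_bigr do rewrite poly_def.
rewrite bigA_distr_bigA coef_sum /sum_geom_pmf [RHS]big_mkcond /=.
apply: eq_bigr => f _; rewrite scaler_prod prodrXr coefZ coefXn eq_sym.
by case: eqP; rewrite ?mulr1 ?mulr0.
Qed.

Theorem corollaryB5 (R : realFieldType) (m : nat) (p : 'I_m -> R)
  (hm : (1 <= m)%N) (hp : forall i, 0 < p i <= 1) (j : nat) (hj : (0 < j)%N) :
  sum_geom_tail p j >=
  sum_geom_tail (fun _ : 'I_m => (\sum_(i < m) p i) / m%:R) j.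
Proof.
set pb := (\sum_(i < m) p i) / m%:R.
have size_p : size (codom p) = m by rewrite size_codom card_ord.
have in01 x : x \in codom p -> 0 <= x <= 1.
  by case/codomP=> i ->; case/andP: (hp i) => /ltW -> ->.
have mean : \sum_(x <- codom p) x = m%:R * pb.
  by rewrite big_image mulrC divfK // pnatr_eq0 -lt0n.
have coefE q : \sum_(k < j) sum_geom_pmf q k
               = \sum_(k < j) (\prod_(i < m) geom_pgf j.-1 (q i))`_k.
  by apply: eq_bigr => k _; rewrite coef_prod_geom_pgf // -ltnS prednK.
rewrite /sum_geom_tail lerD2l lerN2 !coefE prodr_const card_ord.
have := cdf_le_sum (cdf_le_smooth j.-1 size_p in01 mean) (leqnn j.-1).
by rewrite big_image prednK.
Qed.
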